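(* For every $x>0$, $$\int_0^\infty\frac{\sin^2t}{(t+x)^2}\,dt<\frac{1}{2x}\qquad\text{and}\qquad\int_0^\infty\frac{|\sin t|}{(t+x)^2}\,dt<\frac{2}{\pi x}.$$ *)

From Stdlib Require Import Reals.
From Coquelicot Require Export Coquelicot.

From Stdlib Require Import Reals Lra Psatz Classical.
From Coquelicot Require Import Coquelicot.
Open Scope R_scope.

(* Both integrands are nonnegative, so it suffices to bound the integral over each period
   [kπ, (k+1)π] strictly by the increment of an explicit function Φ ≤ 0 and telescope: the
   improper integral is then < -Φ(0), with Φ(t) = -1/(2(t+x)) for sin² and
   Φ(t) = -2/(π(t+x)) for |sin|.  Each period bound is FTC for a primitive K with K = Φ at the
   endpoints and K' > integrand inside, found by two integrations by parts. *)

Ltac prove_nonzero :=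
  match goal with
  | |- _ * _ <> 0 => apply Rmult_integral_contrapositive_currified; prove_nonzero
  | _ => lra
  end.

Ltac continuous_by_derive :=
  apply (ex_derive_continuous (K:=R_AbsRing) (V:=R_NormedModule)); auto_derive;
  repeat split; prove_nonzero.

Lemma PI_lt_27_8 : PI < 27/8.
Proof.
  destruct (PI_ineq 2) as [_ H]. unfold tg_alt, PI_tg in H. simpl in H. lra.
Qed.

Lemma sin_ge_cubic s : 0 <= s <= PI -> s - s ^ 3 / 6 <= sin s.
Proof.
  intros Hs. destruct (sin_bound s 0 (proj1 Hs) (proj2 Hs)) as [H _].
  unfold sin_approx, sin_term in H. simpl in H. lra.
Qed.

Lemma sin_gt_parabola s : 0 < s < PI -> s * (PI - s) / PI < sin s.
Proof.
  assert (Hpi := PI_lt_27_8). assert (Hpi2 := PI2_3_2).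
  assert (half : forall s, 0 < s <= PI / 2 -> s * (PI - s) / PI < sin s).
  { intros r Hr. assert (Hc := sin_ge_cubic r ltac:(lra)).
    (* r² / π > r³ / 6 because π r <= π² / 2 < 6 *)
    assert (r ^ 3 / 6 < r * r / PI).
    { apply Rmult_lt_reg_l with (6 * PI); [lra |].
      replace (6 * PI * (r ^ 3 / 6)) with (PI * r * (r * r)) by field.
      replace (6 * PI * (r * r / PI)) with (6 * (r * r)) by (field; lra).
      apply Rmult_lt_compat_r; nra. }
    replace (r * (PI - r) / PI) with (r - r * r / PI) by (field; lra). lra. }
  intros Hs. destruct (Rle_or_lt s (PI / 2)); [apply half; lra |].
  rewrite <- sin_PI_x. replace (s * (PI - s)) with ((PI - s) * (PI - (PI - s))) by ring.
  apply half; lra.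
Qed.

Lemma Rabs_sin_shift c t : sin c = 0 -> Rabs (sin t) = Rabs (sin (t - c)).
Proof.
  intros Hc. assert (Hcos : Rabs (cos c) = 1).
  { assert (H := sin2_cos2 c). rewrite Hc in H. unfold Rsqr in H.
    destruct (Rle_or_lt 0 (cos c)); [rewrite Rabs_pos_eq | rewrite Rabs_left]; nra. }
  rewrite sin_minus, Hc, Rmult_0_r, Rminus_0_r, Rabs_mult, Hcos. ring.
Qed.

Lemma sin_INR_PI n : sin (INR n * PI) = 0.
Proof. apply sin_eq_0_1. exists (Z.of_nat n). now rewrite INR_IZR_INZ. Qed.

Lemma RInt_lt_of_derive (f g K : R -> R) (a b : R) : a < b ->
  (forall t, a <= t <= b -> is_derive K t (g t)) ->
  (forall t, a <= t <= b -> continuous g t) ->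
  (forall t, a <= t <= b -> continuous f t) ->
  (forall t, a < t < b -> f t < g t) -> RInt f a b < K b - K a.
Proof.
  intros Hab HK Hg Hf Hfg.
  replace (K b - K a) with (RInt g a b).
  - apply RInt_lt; auto.
  - apply is_RInt_unique, (is_RInt_derive (V:=R_CompleteNormedModule));
      intros t Ht; rewrite Rmin_left, Rmax_right in Ht by lra; auto.
Qed.

Section NonnegIntegrand.

Variables (f : R -> R) (a : R).
Hypothesis f_cont : forall t, a <= t -> continuous f t.
Hypothesis f_ge0 : forall t, a <= t -> 0 <= f t.

Lemma ex_RInt_right b c : a <= b -> b <= c -> ex_RInt f b c.
Proof.
  intros Hab Hbc. apply (ex_RInt_continuous (V:=R_CompleteNormedModule)).
  intros t Ht. apply f_cont. rewrite Rmin_left in Ht; lra.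
Qed.

Lemma RInt_right_le b c : a <= b -> b <= c -> RInt f a b <= RInt f a c.
Proof.
  intros Hab Hbc.
  rewrite <- (RInt_Chasles (V:=R_CompleteNormedModule) f a b c)
    by (apply ex_RInt_right; lra).
  assert (0 <= RInt f b c).
  { apply RInt_ge_0; [lra | apply ex_RInt_right; lra | intros; apply f_ge0; lra]. }
  change (RInt f a b <= RInt f a b + RInt f b c). lra.
Qed.

Lemma is_RInt_gen_of_RInt_bounded M :
  (forall b, a <= b -> RInt f a b <= M) ->
  exists L, is_RInt_gen f (at_point a) (Rbar_locally p_infty) L /\ L <= M.
Proof.
  intros HM.
  set (E := fun y => exists b, a <= b /\ y = RInt f a b).
  destruct (completeness E) as [L [L_ub L_least]].
  { exists M. intros y [b [Hb ->]]. auto. }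
  { exists (RInt f a a), a. split; [lra | reflexivity]. }
  exists L. split.
  2: { apply L_least. intros y [b [Hb ->]]. auto. }
  intros P [eps HP].
  assert (Hb0 : exists b0, a <= b0 /\ L - eps < RInt f a b0).
  { apply NNPP. intros Hno.
    assert (L <= L - eps).
    { apply L_least. intros y [b [Hb ->]]. apply Rnot_lt_le. intros Hlt. apply Hno. eauto. }
    destruct eps; simpl in *; lra. }
  destruct Hb0 as [b0 [Hb0 Hlt]].
  apply Filter_prod with (Q := fun s => s = a) (R := fun t => b0 < t);
    [reflexivity | now exists b0 |].
  intros s t -> Ht. exists (RInt f a t). split.
  - apply (RInt_correct (V:=R_CompleteNormedModule)), ex_RInt_right; lra.
  - apply HP.
    assert (RInt f a t <= L) by (apply L_ub; exists t; split; [lra | reflexivity]).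
    assert (RInt f a b0 <= RInt f a t) by (apply RInt_right_le; lra).
    change (Rabs (RInt f a t - L) < eps). rewrite Rabs_left1; lra.
Qed.

End NonnegIntegrand.

Lemma is_RInt_gen_le_telescoping (f Phi : R -> R) (u : nat -> R) :
  (forall t, u 0%nat <= t -> continuous f t) ->
  (forall t, u 0%nat <= t -> 0 <= f t) ->
  (forall n, u n <= u (S n)) ->
  (forall b, exists n, b <= u n) ->
  (forall n, RInt f (u n) (u (S n)) <= Phi (u (S n)) - Phi (u n)) ->
  (forall n, Phi (u n) <= 0) ->
  exists L, is_RInt_gen f (at_point (u 0%nat)) (Rbar_locally p_infty) L
            /\ L <= - Phi (u 0%nat).
Proof.
  intros Hc Hpos Hincr Hunb Hstep Hneg.
  assert (Hu : forall n, u 0%nat <= u n).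
  { induction n; [lra | specialize (Hincr n); lra]. }
  assert (Htele : forall n, RInt f (u 0%nat) (u n) <= Phi (u n) - Phi (u 0%nat)).
  { induction n as [|n IH].
    - rewrite RInt_point. change (0 <= Phi (u 0%nat) - Phi (u 0%nat)). lra.
    - rewrite <- (RInt_Chasles (V:=R_CompleteNormedModule) f _ (u n))
        by (apply (ex_RInt_right f (u 0%nat)); auto).
      specialize (Hstep n).
      change (RInt f (u 0%nat) (u n) + RInt f (u n) (u (S n))
              <= Phi (u (S n)) - Phi (u 0%nat)). lra. }
  apply is_RInt_gen_of_RInt_bounded; auto.
  intros b Hb. destruct (Hunb b) as [n Hn].
  apply Rle_trans with (RInt f (u 0%nat) (u n)); [apply RInt_right_le; auto |].
  specialize (Htele n). specialize (Hneg n). lra.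
Qed.

Lemma is_RInt_gen_lt_telescoping (f Phi : R -> R) (u : nat -> R) :
  (forall t, u 0%nat <= t -> continuous f t) ->
  (forall t, u 0%nat <= t -> 0 <= f t) ->
  (forall n, u n <= u (S n)) ->
  (forall b, exists n, b <= u n) ->
  (forall n, RInt f (u n) (u (S n)) < Phi (u (S n)) - Phi (u n)) ->
  (forall n, Phi (u n) <= 0) ->
  exists L, is_RInt_gen f (at_point (u 0%nat)) (Rbar_locally p_infty) L
            /\ L < - Phi (u 0%nat).
Proof.
  intros Hc Hpos Hincr Hunb Hstep Hneg.
  assert (Hu01 := Hincr 0%nat).
  destruct (is_RInt_gen_le_telescoping f Phi (fun n => u (S n))) as [L [HL HLb]]; auto.
  - intros t Ht. apply Hc. lra.
  - intros t Ht. apply Hpos. lra.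
  - intros b. destruct (Hunb b) as [n Hn]. exists n. specialize (Hincr n). lra.
  - intros n. apply Rlt_le, Hstep.
  - exists (plus (RInt f (u 0%nat) (u 1%nat)) L). split.
    + apply (is_RInt_gen_Chasles (V:=R_NormedModule) f (u 1%nat)); [| exact HL].
      apply is_RInt_gen_at_point, (RInt_correct (V:=R_CompleteNormedModule)).
      apply (ex_RInt_right f (u 0%nat)); auto; lra.
    + specialize (Hstep 0%nat). change (RInt f (u 0%nat) (u 1%nat) + L < - Phi (u 0%nat)).
      lra.
Qed.

Lemma is_RInt_gen_lt_PI_periods (f Phi : R -> R) :
  (forall t, 0 <= t -> continuous f t) ->
  (forall t, 0 <= t -> 0 <= f t) ->
  (forall c, 0 <= c -> sin c = 0 -> RInt f c (c + PI) < Phi (c + PI) - Phi c) ->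
  (forall c, 0 <= c -> Phi c <= 0) ->
  exists L, is_RInt_gen f (at_point 0) (Rbar_locally p_infty) L /\ L < - Phi 0.
Proof.
  intros Hc Hpos Hstep Hneg. assert (HP := PI_RGT_0).
  assert (Hgrid0 : INR 0 * PI = 0) by (simpl; ring).
  assert (HgridS : forall n, INR (S n) * PI = INR n * PI + PI) by (intros; rewrite S_INR; ring).
  assert (Hgrid_ge0 : forall n, 0 <= INR n * PI) by (intros n; assert (Hn := pos_INR n); nra).
  rewrite <- Hgrid0.
  apply (is_RInt_gen_lt_telescoping f Phi (fun n => INR n * PI)); rewrite ?Hgrid0; auto.
  - intros n. rewrite HgridS. specialize (Hgrid_ge0 n). lra.
  - intros b. destruct (INR_archimed PI b HP) as [n Hn]. exists n. lra.
  - intros n. rewrite HgridS. apply Hstep; [apply Hgrid_ge0 | apply sin_INR_PI].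
Qed.

Section Integrals.

Variable x : R.
Hypothesis hx : 0 < x.

(* Integrating sin² t = (1 - cos 2t)/2 twice by parts against (t+x)^-2 leaves the
   error term -3/2 sin² t/(t+x)^4, which has a sign. *)
Lemma sin_sq_primitive s : 0 < s + x ->
  is_derive (fun t => - / (2 * (t + x)) - sin t * cos t / (2 * (t + x) ^ 2)
                      - sin t ^ 2 / (2 * (t + x) ^ 3)) s
    (sin s ^ 2 / (s + x) ^ 2 + 3 / 2 * (sin s ^ 2 / (s + x) ^ 4)).
Proof.
  intros Hpos. auto_derive; [repeat split; prove_nonzero |].
  assert (Hs := sin2_cos2 s). unfold Rsqr in Hs.
  replace (1 * cos s * cos s + sin s * (1 * - sin s)) with (1 - 2 * sin s ^ 2) by nra.
  field. lra.
Qed.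

Lemma sin_sq_period_bound c : 0 <= c -> sin c = 0 ->
  RInt (fun t => sin t ^ 2 / (t + x) ^ 2) c (c + PI)
  < - / (2 * (c + PI + x)) - - / (2 * (c + x)).
Proof.
  intros Hc Hsc. assert (HP := PI_RGT_0).
  set (K := fun t => - / (2 * (t + x)) - sin t * cos t / (2 * (t + x) ^ 2)
                     - sin t ^ 2 / (2 * (t + x) ^ 3)).
  assert (HK : forall b, 0 <= b -> sin b = 0 -> K b = - / (2 * (b + x))).
  { intros b Hb Hsb. unfold K. rewrite Hsb. field. lra. }
  rewrite <- (HK c), <- (HK (c + PI)); try lra; [| now rewrite neg_sin, Hsc, Ropp_0].
  apply RInt_lt_of_derive
    with (g := fun t => sin t ^ 2 / (t + x) ^ 2 + 3 / 2 * (sin t ^ 2 / (t + x) ^ 4));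
    [lra | intros t Ht .. ].
  - apply sin_sq_primitive. lra.
  - continuous_by_derive.
  - continuous_by_derive.
  - assert (Hs : 0 < Rabs (sin t)).
    { rewrite (Rabs_sin_shift c t Hsc), Rabs_pos_eq by (apply sin_ge_0; lra).
      apply sin_gt_0; lra. }
    assert (0 < sin t ^ 2 / (t + x) ^ 4).
    { apply Rdiv_lt_0_compat; [rewrite <- pow2_abs | apply pow_lt]; nra. }
    lra.
Qed.

(* With u = t - c and G(u) = u - sin u - u²/π, which vanishes at 0 and π and is negative in
   between (parabola bound), two integrations by parts of (sin u - 2/π)/(t+x)² leave the
   integral of 6 G(u)/(t+x)^4 < 0. *)
Lemma abs_sin_primitive c s : 0 < s + x ->
  is_derive (fun t => - (2 / (PI * (t + x)))
                      + (1 - cos (t - c) - 2 * (t - c) / PI) / (t + x) ^ 2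
                      + 2 * ((t - c) - sin (t - c) - (t - c) ^ 2 / PI) / (t + x) ^ 3) s
    (sin (s - c) / (s + x) ^ 2
     - 6 * ((s - c) - sin (s - c) - (s - c) ^ 2 / PI) / (s + x) ^ 4).
Proof.
  intros Hs. assert (HP := PI_RGT_0). auto_derive.
  - repeat split; prove_nonzero.
  - unfold Rminus. field. split; lra.
Qed.

Lemma abs_sin_integrand_continuous t : 0 < t + x ->
  continuous (fun t => Rabs (sin t) / (t + x) ^ 2) t.
Proof.
  intros Hpos. apply (continuous_mult (U:=R_UniformSpace) (K:=R_AbsRing)
                        (fun t => Rabs (sin t)) (fun t => / (t + x) ^ 2)).
  - apply continuous_Rabs_comp, continuous_sin_comp, continuous_id.
  - continuous_by_derive.
Qed.

Lemma abs_sin_period_bound c : 0 <= c -> sin c = 0 ->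
  RInt (fun t => Rabs (sin t) / (t + x) ^ 2) c (c + PI)
  < - (2 / (PI * (c + PI + x))) - - (2 / (PI * (c + x))).
Proof.
  intros Hc Hsc. assert (HP := PI_RGT_0).
  set (K := fun t => - (2 / (PI * (t + x)))
                     + (1 - cos (t - c) - 2 * (t - c) / PI) / (t + x) ^ 2
                     + 2 * ((t - c) - sin (t - c) - (t - c) ^ 2 / PI) / (t + x) ^ 3).
  replace (- (2 / (PI * (c + x)))) with (K c)
    by (unfold K; rewrite Rminus_diag, cos_0, sin_0; field; lra).
  replace (- (2 / (PI * (c + PI + x)))) with (K (c + PI))
    by (unfold K; replace (c + PI - c) with PI by ring; rewrite cos_PI, sin_PI; field; lra).
  apply RInt_lt_of_derive
    with (g := fun t => sin (t - c) / (t + x) ^ 2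
                        - 6 * ((t - c) - sin (t - c) - (t - c) ^ 2 / PI) / (t + x) ^ 4);
    [lra | intros t Ht .. ].
  - apply abs_sin_primitive. lra.
  - continuous_by_derive.
  - apply abs_sin_integrand_continuous. lra.
  - rewrite (Rabs_sin_shift c t Hsc), Rabs_pos_eq by (apply sin_ge_0; lra).
    assert (HG : (t - c) - sin (t - c) - (t - c) ^ 2 / PI < 0).
    { assert (Hpar := sin_gt_parabola (t - c) ltac:(lra)).
      replace ((t - c) - sin (t - c) - (t - c) ^ 2 / PI)
        with ((t - c) * (PI - (t - c)) / PI - sin (t - c)) by (field; lra).
      lra. }
    assert (0 < / (t + x) ^ 4) by (apply Rinv_0_lt_compat, pow_lt; lra).
    unfold Rdiv. nra.
Qed.

Lemma sin_sq_improper_integral_lt : exists I : R,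
  is_RInt_gen (fun t => sin t ^ 2 / (t + x) ^ 2) (at_point 0) (Rbar_locally p_infty) I
  /\ I < 1 / (2 * x).
Proof.
  destruct (is_RInt_gen_lt_PI_periods (fun t => sin t ^ 2 / (t + x) ^ 2)
              (fun t => - / (2 * (t + x)))) as [I [HI HIlt]].
  - intros t Ht. continuous_by_derive.
  - intros t Ht. apply Rdiv_le_0_compat; [apply pow2_ge_0 | apply pow_lt; lra].
  - exact sin_sq_period_bound.
  - intros c Hc. assert (0 < / (2 * (c + x))) by (apply Rinv_0_lt_compat; lra). lra.
  - exists I. split; [exact HI |]. rewrite Rplus_0_l, Ropp_involutive in HIlt.
    replace (1 / (2 * x)) with (/ (2 * x)) by (field; lra). exact HIlt.
Qed.

Lemma abs_sin_improper_integral_lt : exists I : R,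
  is_RInt_gen (fun t => Rabs (sin t) / (t + x) ^ 2) (at_point 0) (Rbar_locally p_infty) I
  /\ I < 2 / (PI * x).
Proof.
  assert (HP := PI_RGT_0).
  destruct (is_RInt_gen_lt_PI_periods (fun t => Rabs (sin t) / (t + x) ^ 2)
              (fun t => - (2 / (PI * (t + x))))) as [I [HI HIlt]].
  - intros t Ht. apply abs_sin_integrand_continuous. lra.
  - intros t Ht. apply Rdiv_le_0_compat; [apply Rabs_pos | apply pow_lt; lra].
  - exact abs_sin_period_bound.
  - intros c Hc. assert (0 < 2 / (PI * (c + x))) by (apply Rdiv_lt_0_compat; nra). lra.
  - exists I. split; [exact HI |]. rewrite Rplus_0_l, Ropp_involutive in HIlt. exact HIlt.
Qed.

End Integrals.

Theorem mainTheorem7 (x : R) (hx : 0 < x) :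
  (exists I1 : R,
      is_RInt_gen (fun t : R => (sin t) ^ 2 / (t + x) ^ 2)
                  (at_point 0) (Rbar_locally p_infty) I1
      /\ I1 < 1 / (2 * x))
  /\
  (exists I2 : R,
      is_RInt_gen (fun t : R => Rabs (sin t) / (t + x) ^ 2)
                  (at_point 0) (Rbar_locally p_infty) I2
      /\ I2 < 2 / (PI * x)).
Proof.
  split; [apply sin_sq_improper_integral_lt | apply abs_sin_improper_integral_lt]; exact hx.
Qed.
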